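(* Let $\mathcal{H}_A,\mathcal{H}_B$ have finite dimensions $d_A,d_B$, and put $d=\min\{d_A,d_B\}$, $D=\max\{d_A,d_B\}$. Let $\{P_k^A\}_{k=1}^{d^2}$ be a regular, coherent, degree-1 quantum design with $r=1$ in dimension $d_A$ having $d^2$ elements, and $\{P_k^B\}_{k=1}^{d^2}$ a regular, coherent, degree-1 quantum design with $r=1$ in dimension $d_B$ having $d^2$ elements. Define $$\rho=\frac{1}{d^2}\sum_{k=1}^{d^2}P_k^A\otimes P_k^B.$$ Then the operator-Schmidt coefficients of $\rho$ are $\alpha=1/\sqrt{Dd}$ with multiplicity one and $\beta=\sqrt{\frac{D-1}{D(d^2-1)}\cdot\frac{d-1}{d(d^2-1)}}$ with multiplicity $d^2-1$.
   Context: A quantum design in dimension $b$ with $v$ elements is a set of $v$ orthogonal projections $\{P_k\}_{k=1}^v$ on $\mathbb{C}^b$. It is regular with $r=1$ if every $P_k$ has rank one; coherent if $\sum_k P_k$ is a scalar multiple of the identity; and of degree 1 if there is $\mu\in\mathbb{R}$ with $\mathrm{tr}(P_kP_l)=\mu$ for all $k\ne l$. The operator-Schmidt decomposition of a state $\rho$ on $\mathcal{H}_A\otimes\mathcal{H}_B$ is a decomposition $\rho=\sum_{k=1}^{d^2}\lambda_k G_k\otimes H_k$ with real $\lambda_k\ge0$, where $\{G_k\}$ and $\{H_k\}$ are orthonormal sets (w.r.t. the Hilbert–Schmidt inner product $\mathrm{tr}(XY)$) of Hermitian operators on $\mathcal{H}_A$ and $\mathcal{H}_B$ respectively; the $\lambda_k$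 (with multiplicity) are the operator-Schmidt coefficients. Equivalently, they are the singular values of the correlation matrix $\mathcal{C}_{ij}=\mathrm{tr}(\rho\,A_i\otimes B_j)$ for orthonormal bases $\{A_i\}$, $\{B_j\}$ of the Hermitian operators on $\mathcal{H}_A$, $\mathcal{H}_B$. *)

From HB Require Import structures.
From mathcomp Require Import all_boot all_order all_algebra.
From mathcomp Require Import mxtens.
Set Implicit Arguments. Unset Strict Implicit. Unset Printing Implicit Defensive.
Import Order.TTheory GRing.Theory Num.Theory.
Local Open Scope ring_scope.

Section Defs.
Variable C : numClosedFieldType.

Definition adjmx (n : nat) (A : 'M[C]_n) : 'M[C]_n := map_mx Num.conj A^T.

Definition hermitian (n : nat) (A : 'M[C]_n) : Prop := adjmx A = A.

Definition orth_proj (n : nat) (P : 'M[C]_n) : Prop :=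
  hermitian P /\ P *m P = P.

Definition quantum_design (b v : nat) (P : 'I_v -> 'M[C]_b) : Prop :=
  forall k, orth_proj (P k).

Definition regular_r1 (b v : nat) (P : 'I_v -> 'M[C]_b) : Prop :=
  forall k, \rank (P k) = 1%N.

Definition coherent (b v : nat) (P : 'I_v -> 'M[C]_b) : Prop :=
  exists c : C, \sum_k P k = c%:M.

Definition degree1 (b v : nat) (P : 'I_v -> 'M[C]_b) : Prop :=
  exists mu : C, mu \is Num.real /\
    forall k l, k != l -> \tr (P k *m P l) = mu.

Definition orthonormal_herm (n v : nat) (G : 'I_v -> 'M[C]_n) : Prop :=
  (forall k, hermitian (G k)) /\
  (forall k l, \tr (G k *m G l) = (k == l)%:R).

Definition os_decomposition (dA dB : nat) (rho : 'M[C]_(dA * dB))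
  (lam : 'I_((minn dA dB) ^ 2) -> C)
  (G : 'I_((minn dA dB) ^ 2) -> 'M[C]_dA)
  (H : 'I_((minn dA dB) ^ 2) -> 'M[C]_dB) : Prop :=
  (forall k, 0 <= lam k) /\ orthonormal_herm G /\ orthonormal_herm H /\
  rho = \sum_k lam k *: (G k *t H k).

Definition os_coefficients_are (dA dB : nat) (rho : 'M[C]_(dA * dB))
  (s : seq C) : Prop :=
  (exists lam G H, @os_decomposition dA dB rho lam G H /\
     perm_eq [seq lam k | k <- enum 'I_((minn dA dB) ^ 2)] s) /\
  (forall lam G H, @os_decomposition dA dB rho lam G H ->
     perm_eq [seq lam k | k <- enum 'I_((minn dA dB) ^ 2)] s).

End Defs.

From Pilot Require Import Defs.
From HB Require Import structures.
From mathcomp Require Import all_boot all_order all_algebra.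
From mathcomp Require Import mxtens.
From mathcomp Require Import ring.
Set Implicit Arguments. Unset Strict Implicit. Unset Printing Implicit Defensive.
Import Order.TTheory GRing.Theory Num.Theory.
Local Open Scope ring_scope.

(* Write n = d^2.  A rank-one coherent degree-one design {P_k} with n elements
   in dimension m has Gram matrix [tr (P_k P_l)] = (1 - mu) I + mu J, with J the
   all-ones matrix: its eigenvalues are n/m, on the all-ones vector, and 1 - mu,
   with multiplicity n - 1.
   Pairing both sides of rho = sum_j lam_j G_j (x) H_j with the operators X (x) Y
   shows that diag(lam_j^2) is similar to n^-2 Gram(P^B) Gram(P^A), a matrix of
   the form p I + q J.  Hence every lam_j^2 equals p + n q = 1/(d_A d_B) or
   p = beta^2, and the trace forces the first value to occur exactly once.
   Conversely, a real symmetric orthogonal (Householder) matrix O sending the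
   all-ones vector to sqrt(n) e_0 diagonalizes both Gram matrices at once, so
   the normalized families sum_k O_jk P^A_k and sum_k O_jk P^B_k are orthonormal
   and yield an operator-Schmidt decomposition of rho. *)

Lemma sum_mul_delta (R : pzSemiRingType) n (F : 'I_n -> R) i :
  \sum_j F j * (j == i)%:R = F i.
Proof.
rewrite (bigD1 i) //= eqxx mulr1 big1 ?addr0 // => j /negbTE->.
by rewrite mulr0.
Qed.

Section TensorGram.
Variable R : comPzRingType.

Lemma tensmxZl m n p q (c : R) (A : 'M[R]_(m, n)) (B : 'M[R]_(p, q)) :
  (c *: A) *t B = c *: (A *t B).
Proof. by apply/matrixP => i j; rewrite !mxE mulrA. Qed.

Lemma tensmxZr m n p q (c : R) (A : 'M[R]_(m, n)) (B : 'M[R]_(p, q)) :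
  A *t (c *: B) = c *: (A *t B).
Proof. by apply/matrixP => i j; rewrite !mxE mulrCA. Qed.

Lemma tensmx_suml (I : Type) (r : seq I) (P : pred I) m n p q
    (A : I -> 'M[R]_(m, n)) (B : 'M[R]_(p, q)) :
  (\sum_(i <- r | P i) A i) *t B = \sum_(i <- r | P i) (A i *t B).
Proof.
apply/matrixP => i j; rewrite !mxE !summxE mulr_suml.
by apply: eq_bigr => k _; rewrite mxE.
Qed.

Lemma tensmx_sumr (I : Type) (r : seq I) (P : pred I) m n p q
    (A : 'M[R]_(m, n)) (B : I -> 'M[R]_(p, q)) :
  A *t (\sum_(i <- r | P i) B i) = \sum_(i <- r | P i) (A *t B i).
Proof.
apply/matrixP => i j; rewrite !mxE !summxE mulr_sumr.
by apply: eq_bigr => k _; rewrite mxE.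
Qed.

Lemma mxtrace_tensmx m p (A : 'M[R]_m) (B : 'M[R]_p) :
  \tr (A *t B) = \tr A * \tr B.
Proof. by rewrite /mxtrace mulr_sum; apply: eq_bigr => i _; rewrite mxE. Qed.

Lemma mxtrace_sum_tens_mul N m p (lam : 'I_N -> R)
    (G : 'I_N -> 'M[R]_m) (H : 'I_N -> 'M[R]_p) X Y :
  \tr ((\sum_k lam k *: (G k *t H k)) *m (X *t Y)) =
  \sum_k lam k * (\tr (G k *m X) * \tr (H k *m Y)).
Proof.
rewrite mulmx_suml raddf_sum; apply: eq_bigr => k _.
by rewrite -scalemxAl /= mxtraceZ tensmx_mul mxtrace_tensmx.
Qed.

Lemma sum_tens_lincomb N N' m p (W W' : 'M[R]_(N', N))
    (a : 'I_N -> 'M[R]_m) (b : 'I_N -> 'M[R]_p) :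
  \sum_j ((\sum_k W j k *: a k) *t (\sum_l W' j l *: b l)) =
  \sum_k \sum_l (W^T *m W') k l *: (a k *t b l).
Proof.
under eq_bigr => j _ do rewrite tensmx_suml.
under eq_bigr => j _ do under eq_bigr => k _ do rewrite tensmx_sumr.
rewrite exchange_big /=; apply: eq_bigr => k _.
rewrite exchange_big /=; apply: eq_bigr => l _.
rewrite !mxE scaler_suml; apply: eq_bigr => j _.
by rewrite tensmxZl tensmxZr scalerA !mxE.
Qed.

Lemma sum_tens_orthogonal N m p (W : 'M[R]_N)
    (a : 'I_N -> 'M[R]_m) (b : 'I_N -> 'M[R]_p) :
  W^T *m W = 1%:M ->
  \sum_j ((\sum_k W j k *: a k) *t (\sum_l W j l *: b l)) = \sum_k (a k *t b k).
Proof.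
move=> W_orth; rewrite sum_tens_lincomb W_orth; apply: eq_bigr => k _.
rewrite (bigD1 k) //= big1 => [|l /negbTE lk]; first by rewrite mxE eqxx scale1r addr0.
by rewrite mxE eq_sym lk scale0r.
Qed.

Definition gram N N' m (a : 'I_N -> 'M[R]_m) (b : 'I_N' -> 'M[R]_m) :
  'M[R]_(N, N') := \matrix_(i, j) \tr (a i *m b j).

Lemma gram_lincomb N N' M M' m (W : 'M[R]_(M, N)) (W' : 'M[R]_(M', N'))
    (a : 'I_N -> 'M[R]_m) (b : 'I_N' -> 'M[R]_m) :
  gram (fun i => \sum_k W i k *: a k) (fun j => \sum_l W' j l *: b l) =
  W *m gram a b *m W'^T.
Proof.
apply/matrixP => i j; rewrite !mxE mulmx_suml raddf_sum /=.
under eq_bigr => k _ do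
  rewrite -scalemxAl /= mulmx_sumr mxtraceZ raddf_sum /= mulr_sumr.
rewrite exchange_big /=; apply: eq_bigr => l _.
rewrite !mxE mulr_suml; apply: eq_bigr => k _.
by rewrite -scalemxAr /= mxtraceZ !mxE mulrCA mulrC.
Qed.

Lemma gram_scale N N' m (c : 'I_N -> R) (c' : 'I_N' -> R)
    (a : 'I_N -> 'M[R]_m) (b : 'I_N' -> 'M[R]_m) :
  gram (fun i => c i *: a i) (fun j => c' j *: b j) =
  diag_mx (\row_i c i) *m gram a b *m diag_mx (\row_j c' j).
Proof.
apply/matrixP => i j; rewrite mul_mx_diag mul_diag_mx !mxE.
by rewrite -scalemxAl -scalemxAr /= !mxtraceZ mulrA mulrAC.
Qed.

End TensorGram.

Section OnesMatrix.
Variable R : comPzRingType.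

Definition ones_mx n : 'M[R]_n := const_mx 1.

Lemma ones_mx_col n : ones_mx n = (const_mx 1 : 'cV[R]_n) *m const_mx 1.
Proof.
by apply/matrixP => i j; rewrite !mxE big_ord1 !mxE mulr1.
Qed.

Lemma mul_ones_mx n : ones_mx n *m ones_mx n = n%:R *: ones_mx n.
Proof.
apply/matrixP => i j; rewrite !mxE.
under eq_bigr do rewrite !mxE mulr1.
by rewrite sumr_const card_ord mulr1.
Qed.

Lemma mul_scalar_ones_mx n (s a t b : R) :
  (s%:M + a *: ones_mx n) *m (t%:M + b *: ones_mx n) =
  (s * t)%:M + (s * b + a * t + a * b * n%:R) *: ones_mx n.
Proof.
rewrite mulmxDl !mulmxDr !mul_scalar_mx -!scalemxAl -!scalemxAr mul_mx_scalar.
rewrite mul_ones_mx scale_scalar_mx !scalerA.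
by apply/matrixP => i j; rewrite !mxE; case: (i == j); rewrite /= ?mulr1n ?mulr0n; ring.
Qed.

End OnesMatrix.

Section FieldMatrix.
Variable F : fieldType.

Lemma scalar_ones_unitmx n (s a : F) :
  s != 0 -> s + n%:R * a != 0 -> s%:M + a *: ones_mx F n \in unitmx.
Proof.
move=> s0 sa0; pose b := - a / (s * (s + n%:R * a)).
suff inv : (s%:M + a *: ones_mx F n) *m (s^-1%:M + b *: ones_mx F n) = 1%:M.
  by case/mulmx1_unit: inv.
rewrite mul_scalar_ones_mx mulfV //.
suff -> : s * b + a * s^-1 + a * b * n%:R = 0 by rewrite scale0r addr0.
by rewrite /b; field; rewrite s0 sa0.
Qed.

Definition householder_mx n (w : 'cV[F]_n) : 'M[F]_n :=
  1%:M - (2 / (w^T *m w) 0 0) *: (w *m w^T).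

Lemma trmx_householder n (w : 'cV[F]_n) : (householder_mx w)^T = householder_mx w.
Proof. by rewrite linearB /= trmx1 linearZ /= trmx_mul trmxK. Qed.

(* No positivity of w^T w is needed: if it vanishes, the junk value 2 / 0 = 0
   makes the matrix the identity. *)
Lemma householder_mxK n (w : 'cV[F]_n) : householder_mx w *m householder_mx w = 1%:M.
Proof.
set q := (w^T *m w) 0 0; set t := 2 / q.
have wTw : w^T *m w = q%:M by apply/matrixP => i j; rewrite !ord1 [RHS]mxE mulr1n.
have WW : w *m w^T *m (w *m w^T) = q *: (w *m w^T).
  by rewrite mulmxA -(mulmxA w) wTw mul_mx_scalar -scalemxAl.
have tq : t * t * q = t + t.
  rewrite /t; have [->|q0] := eqVneq q 0; first by rewrite invr0 !(mulr0, addr0).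
  by field.
rewrite /householder_mx -/q -/t mulmxBl !mulmxBr -!scalemxAl -!scalemxAr.
by rewrite !mul1mx !mulmx1 WW !scalerA tq scalerDl opprB addrK subrK.
Qed.

Lemma mxtrace_idem n (P : 'M[F]_n) : P *m P = P -> \tr P = (\rank P)%:R.
Proof.
move=> PP; have cr := mulmx_base P.
rewrite -{1}cr mxtrace_mulC -mxtrace1; congr (\tr _).
apply: (row_free_inj (row_base_free P)); rewrite mul1mx.
move: (col_base P) (row_base P) cr (col_base_full P) => c r cr /row_fullP[B Bc].
have crcr : c *m r *m (c *m r) = c *m r by rewrite cr.
by have := congr1 (mulmx B) crcr; rewrite !mulmxA Bc !mul1mx.
Qed.

Lemma unitmx_row_neq0 n (U : 'M[F]_n) i : U \in unitmx -> exists j, U i j != 0.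
Proof.
move=> Uu; apply/existsP; apply: contraTT Uu; rewrite negb_exists => /forallP U0.
rewrite unitmxE unitfE negbK (expand_det_row _ i) big1 // => j _.
by rewrite (eqP (negPn (U0 j))) mul0r.
Qed.

Lemma unitmx_ker0 n (A : 'M[F]_n) :
  (forall x : 'rV_n, x *m A = 0 -> x = 0) -> A \in unitmx.
Proof.
move=> A_ker0; rewrite -row_free_unit -kermx_eq0; apply/eqP/row_matrixP => i.
by rewrite row0; apply/A_ker0/sub_kermxP; rewrite row_sub.
Qed.

Lemma mxtrace_conj n (U A B : 'M[F]_n) :
  U \in unitmx -> A *m U = U *m B -> \tr A = \tr B.
Proof. by move=> Uu AU; rewrite -(mulmxK Uu A) AU -mulmxA mxtrace_mulC mulmxKV. Qed.

Lemma eigen_scalar_ones_mx n (d : 'I_n -> F) (U : 'M[F]_n) (p q : F) i :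
  U \in unitmx -> diag_mx (\row_i d i) *m U = U *m (p%:M + q *: ones_mx F n) ->
  (d i - (p + n%:R * q)) * (d i - p) = 0.
Proof.
move=> Uu DU.
have rowU j : (d i - p) * U i j = q * \sum_k U i k.
  have := congr1 (fun M : 'M[F]_n => M i j) DU.
  rewrite mulmxDr mul_mx_scalar -scalemxAr mul_diag_mx !mxE => DUij.
  rewrite mulrBl DUij addrAC subrr add0r.
  by under eq_bigr do rewrite mxE mulr1.
have sumU : (d i - (p + n%:R * q)) * \sum_k U i k = 0.
  have -> : (d i - (p + n%:R * q)) * \sum_k U i k =
            \sum_k (d i - p) * U i k - n%:R * q * \sum_k U i k.
    by rewrite -mulr_sumr; ring.
  under eq_bigr do rewrite rowU.
  by rewrite sumr_const card_ord -mulr_natl; ring.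
have [j Uij] := unitmx_row_neq0 i Uu.
by apply/eqP; rewrite -(mulIr_eq0 _ (mulIf Uij)) -mulrA rowU mulrCA sumU mulr0.
Qed.

End FieldMatrix.

Lemma perm_eq_sqr_values (R : numDomainType) (L : seq R) (a b : R) :
  0 <= a -> 0 <= b -> (0 < size L)%N ->
  {in L, forall x, 0 <= x /\ (x ^+ 2 = a ^+ 2 \/ x ^+ 2 = b ^+ 2)} ->
  \sum_(x <- L) x ^+ 2 = a ^+ 2 + (size L).-1%:R * b ^+ 2 ->
  perm_eq L (a :: nseq (size L).-1 b).
Proof.
move=> a0 b0 L0 Lab sumL.
have sqr_inj (x y : R) : 0 <= x -> 0 <= y -> x ^+ 2 = y ^+ 2 -> x = y.
  by move=> x0 y0 /eqP; rewrite eqrXn2 // => /eqP.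
have Lab' : {in L, forall x, x = a \/ x = b}.
  move=> x /Lab[x0 [xa|xb]]; [left; exact: sqr_inj xa | right; exact: sqr_inj xb].
have [a_eq_b|ab] := eqVneq a b.
  subst b.
  have /all_pred1P L_a : all (pred1 a) L by apply/allP => x /Lab'[] -> /=.
  by rewrite {1}L_a -(prednK L0).
have count_a : count_mem a L = 1%N.
  have sqr_ab : a ^+ 2 - b ^+ 2 != 0 by rewrite subr_eq0 eqrXn2.
  suff E : (count_mem a L)%:R * (a ^+ 2 - b ^+ 2) = a ^+ 2 - b ^+ 2.
    by apply/eqP; rewrite -(pnatr_eq1 R); apply/eqP/(mulIf sqr_ab); rewrite mul1r.
  transitivity (\sum_(x <- L) (x ^+ 2 - b ^+ 2)).
    rewrite -sum1_count natr_sum mulr_suml big_mkcond /=; apply: eq_big_seq => x xL.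
    case: (Lab' x xL) => ->; first by rewrite eqxx mul1r.
    by rewrite eq_sym (negbTE ab) subrr.
  rewrite sumrB sumL big_const_seq count_predT iter_addr_0 -(prednK L0) /=.
  by rewrite mulrSr mulr_natl; ring.
have aL : a \in L by rewrite -has_pred1 has_count count_a.
have L_rem := perm_to_rem aL.
have a_rem : a \notin rem a L.
  apply/count_memPn; move/permP: L_rem => /(_ (pred1 a)) /=.
  by rewrite count_a eqxx => -[].
have rem_b : rem a L = nseq (size (rem a L)) b.
  apply/all_pred1P/allP => y yr; have [ya|-> //=] := Lab' y (mem_rem yr).
  by rewrite ya in yr; rewrite yr in a_rem.
by move: L_rem; rewrite rem_b size_rem.
Qed.

Section ComplexMatrix.
Variable C : numClosedFieldType.

Lemma householder_ones n (i0 : 'I_n) : exists O : 'M[C]_n,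
  [/\ forall i j, O i j \is Num.real, O^T = O, O *m O = 1%:M &
      O *m (const_mx 1 : 'cV_n) = sqrtC n%:R *: delta_mx i0 (0 : 'I_1)].
Proof.
set r := sqrtC n%:R; pose u : 'cV[C]_n := const_mx 1.
pose w : 'cV[C]_n := r *: delta_mx i0 (0 : 'I_1) - u.
have r_real : r \is Num.real by rewrite ger0_real // sqrtC_ge0 ler0n.
have wE k : w k 0 = r * (k == i0)%:R - 1 by rewrite !mxE eqxx andbT.
have wTw : (w^T *m w) 0 0 = 2 * n%:R - 2 * r.
  have sqr_w k : w^T 0 k * w k 0 = (r ^+ 2 - 2 * r) * (k == i0)%:R + 1.
    by rewrite mxE wE; case: (k == i0); rewrite /= ?mulr1 ?mulr0; ring.
  rewrite mxE; under eq_bigr do rewrite sqr_w.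
  by rewrite big_split /= (sum_mul_delta (fun=> _)) sumr_const card_ord sqrtCK; ring.
have wTu : w^T *m u = (r - n%:R)%:M.
  apply/matrixP => i j; rewrite !ord1 !mxE.
  under eq_bigr => k _ do rewrite !mxE eqxx andbT mulr1.
  by rewrite sumrB (sum_mul_delta (fun=> r)) sumr_const card_ord eqxx mulr1n.
have t_real : 2 / (w^T *m w) 0 0 \is Num.real.
  by rewrite rpredM ?rpred_nat ?rpredV // wTw !(rpredB, rpredM, rpred_nat).
exists (householder_mx w); split; [|exact: trmx_householder|exact: householder_mxK|].
  move=> i j; rewrite /householder_mx; move: (2 / _) t_real => t t_real.
  rewrite !mxE big_ord1 !mxE.
  by rewrite rpredB ?rpred_nat // rpredM // !(rpredB, rpredM, rpred_nat, rpred1).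
rewrite /householder_mx mulmxBl mul1mx -scalemxAl -mulmxA wTu mul_mx_scalar scalerA.
have [q0|q0] := eqVneq ((w^T *m w) 0 0) 0.
  (* This happens only for n = 1, where O = 1 and r = 1. *)
  have rn : r = n%:R.
    have : 2 * (n%:R - r) = 0 by rewrite mulrBr -wTw.
    by move/eqP; rewrite mulf_eq0 pnatr_eq0 /= subr_eq0 => /eqP <-.
  have n1 : n = 1%N.
    have n0 : (0 < n)%N := leq_ltn_trans (leq0n i0) (ltn_ord i0).
    have := sqrtCK (n%:R : C); rewrite -/r rn -natrX => /eqP; rewrite eqr_nat.
    by rewrite -{2}[n]muln1 expnS expn1 eqn_pmul2l // => /eqP.
  subst n; rewrite q0 invr0 mulr0 mul0r scale0r subr0.
  by apply/matrixP => k l; rewrite !ord1 rn !mxE /= mulr1.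
have -> : 2 / (w^T *m w) 0 0 * (r - n%:R) = -1.
  by rewrite wTw; field; rewrite -wTw.
by rewrite scaleN1r opprK addrC subrK.
Qed.
Lemma hermitian_lincomb n m (c : 'I_n -> C) (a : 'I_n -> 'M[C]_m) :
  (forall k, c k \is Num.real) -> (forall k, Defs.hermitian (a k)) ->
  Defs.hermitian (\sum_k c k *: a k).
Proof.
move=> c_real a_herm; apply/matrixP => i j; rewrite !mxE !summxE rmorph_sum.
apply: eq_bigr => k _; rewrite !mxE rmorphM /= conj_Creal //.
by have /matrixP/(_ i j) := a_herm k; rewrite !mxE => ->.
Qed.

Lemma design_gram m n (P : 'I_n -> 'M[C]_m) :
  (0 < m)%N -> (0 < n)%N -> (m = 1%N -> n = 1%N) ->
  quantum_design P -> regular_r1 P -> coherent P -> degree1 P ->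
  exists mu : C, [/\ gram P P = (1 - mu)%:M + mu *: ones_mx C n,
                     0 < 1 - mu & 1 - mu + n%:R * mu = n%:R / m%:R].
Proof.
move=> m0 n0 m1 P_proj P_rank [c P_sum] [mu [_ P_mu]].
have tr1 k : \tr (P k) = 1 by rewrite mxtrace_idem ?P_rank //; case: (P_proj k).
have P_gram : gram P P = (1 - mu)%:M + mu *: ones_mx C n.
  apply/matrixP => k l; rewrite !mxE; have [<-|kl] := eqVneq k l.
    by case: (P_proj k) => _ ->; rewrite tr1 mulr1n mulr1 subrK.
  by rewrite P_mu // mulr0n mulr1 add0r.
have n_cm : n%:R = c * m%:R.
  have := congr1 mxtrace P_sum; rewrite raddf_sum mxtrace_scalar /=.
  under eq_bigr do rewrite tr1.
  by rewrite sumr_const card_ord mulr_natr.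
have row_sum : 1 - mu + n%:R * mu = c.
  pose k0 := Ordinal n0.
  have := congr1 (fun M => \tr (P k0 *m M)) P_sum.
  rewrite /= mulmx_sumr raddf_sum mul_mx_scalar mxtraceZ tr1 mulr1 => <-.
  rewrite (bigD1 k0) //= (P_proj k0).2 tr1.
  under eq_bigr => l lk0 do rewrite P_mu 1?eq_sym //.
  by rewrite sumr_const cardC1 card_ord -subn1 mulrnBr //; ring.
have m_gt0 : m%:R != 0 :> C by rewrite pnatr_eq0 -lt0n.
have c_val : c = n%:R / m%:R by rewrite n_cm mulfK.
(* For n = 1 the degree-one condition is vacuous and mu = 0 will do. *)
have [n1|n1] := eqVneq n 1%N.
  subst n; exists 0; rewrite subr0 ltr01 mulr0 addr0; split => //.
    rewrite scale0r addr0; apply/matrixP => k l.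
    by rewrite !ord1 P_gram !mxE !mulr1n mulr1 subrK.
  have c1 : c = 1 by rewrite -row_sum mul1r subrK.
  by move: n_cm; rewrite c1 mul1r => <-; rewrite divr1.
have m_gt1 : (1 < m)%N.
  by rewrite ltn_neqAle eq_sym m0 andbT; apply: contra n1 => /eqP/m1->.
exists mu; split; rewrite ?row_sum //.
have n1_gt0 : 0 < (n.-1)%:R :> C by rewrite ltr0n -ltnS prednK // ltn_neqAle eq_sym n1.
rewrite -(pmulr_rgt0 _ n1_gt0).
have -> : (n.-1)%:R * (1 - mu) = c * (m%:R - 1).
  by rewrite -subn1 natrB // [RHS]mulrBr mulr1 -n_cm -row_sum; ring.
by rewrite mulr_gt0 ?subr_gt0 ?ltr1n // c_val divr_gt0 ?ltr0n.
Qed.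

End ComplexMatrix.

Section HouseholderFrame.
Variables (C : numClosedFieldType) (n : nat) (i0 : 'I_n) (O : 'M[C]_n).
Hypotheses (O_real : forall i j, O i j \is Num.real) (O_sym : O^T = O)
  (O_orth : O *m O = 1%:M)
  (O_ones : O *m (const_mx 1 : 'cV_n) = sqrtC n%:R *: delta_mx i0 (0 : 'I_1)).

Definition frame_scale (mu : C) j :=
  sqrtC (if j == i0 then 1 - mu + n%:R * mu else 1 - mu).

Definition frame m (a : 'I_n -> 'M[C]_m) mu j :=
  (frame_scale mu j)^-1 *: \sum_k O j k *: a k.

Lemma householder_conj_gram mu :
  O *m ((1 - mu)%:M + mu *: ones_mx C n) *m O^T =
  diag_mx (\row_j frame_scale mu j ^+ 2).
Proof.
have OJO : O *m ones_mx C n *m O^T = n%:R *: delta_mx i0 i0.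
  rewrite ones_mx_col mulmxA O_ones -mulmxA -trmx_const -trmx_mul O_ones.
  rewrite linearZ /= -scalemxAl -scalemxAr scalerA -expr2 sqrtCK trmx_delta.
  by rewrite mul_delta_mx.
rewrite mulmxDr mulmxDl mul_mx_scalar -scalemxAr -!scalemxAl OJO O_sym O_orth.
apply/matrixP => i j; rewrite !mxE sqrtCK.
have [<-|ij] := eqVneq i j.
  by rewrite andbb; case: (i == i0); rewrite /= ?mulr1n ?mulr1 ?mulr0 ?addr0 // mulrC.
have -> : (i == i0) && (j == i0) = false by apply: contraNF ij => /andP[/eqP-> /eqP->].
by rewrite /= !mulr0 addr0 mulr0n.
Qed.

Lemma frame_scale_gt0 mu :
  0 < 1 - mu -> 0 < 1 - mu + n%:R * mu -> forall j, 0 < frame_scale mu j.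
Proof. by move=> e_gt0 f_gt0 j; rewrite sqrtC_gt0; case: ifP. Qed.

Lemma frame_orthonormal m (a : 'I_n -> 'M[C]_m) mu :
  (forall k, Defs.hermitian (a k)) ->
  gram a a = (1 - mu)%:M + mu *: ones_mx C n ->
  0 < 1 - mu -> 0 < 1 - mu + n%:R * mu -> orthonormal_herm (frame a mu).
Proof.
move=> a_herm a_gram e_gt0 f_gt0; have s_gt0 := frame_scale_gt0 e_gt0 f_gt0.
split=> [j|k l].
  rewrite /frame scaler_sumr; under eq_bigr do rewrite scalerA.
  by apply: hermitian_lincomb => // k; rewrite rpredM // rpredV gtr0_real.
have -> : \tr (frame a mu k *m frame a mu l) = gram (frame a mu) (frame a mu) k l.
  by rewrite mxE.
rewrite (gram_scale (fun j => (frame_scale mu j)^-1) (fun j => (frame_scale mu j)^-1)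
           (fun j => \sum_k O j k *: a k) (fun j => \sum_k O j k *: a k)).
rewrite gram_lincomb a_gram householder_conj_gram mul_mx_diag mul_diag_mx !mxE.
have [<-|kl] := eqVneq k l; last by rewrite mulr0n mulr0 mul0r.
by rewrite mulr1n expr2 mulrA mulVf ?mul1r ?mulfV // gt_eqF.
Qed.

Lemma frame_tens_sum m p (a : 'I_n -> 'M[C]_m) (b : 'I_n -> 'M[C]_p) muA muB :
  (forall j, 0 < frame_scale muA j) -> (forall j, 0 < frame_scale muB j) ->
  \sum_j (frame_scale muA j * frame_scale muB j / n%:R) *:
      (frame a muA j *t frame b muB j) =
  n%:R^-1 *: \sum_k (a k *t b k).
Proof.
move=> sA_gt0 sB_gt0; rewrite -(@sum_tens_orthogonal _ _ _ _ O) ?O_sym //.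
rewrite scaler_sumr; apply: eq_bigr => j _.
rewrite /frame tensmxZl tensmxZr !scalerA; congr (_ *: _).
have n_gt0 : 0 < n%:R :> C by rewrite ltr0n (leq_ltn_trans (leq0n i0) (ltn_ord i0)).
by field; rewrite (gt_eqF n_gt0) (gt_eqF (sA_gt0 j)) (gt_eqF (sB_gt0 j)).
Qed.

End HouseholderFrame.

Section SchmidtCoefficientSpectrum.
Variables (C : numClosedFieldType) (n mA mB : nat).
Variables (a G : 'I_n -> 'M[C]_mA) (b H : 'I_n -> 'M[C]_mB) (lam : 'I_n -> C).
Hypotheses (n_gt0 : (0 < n)%N)
  (a_unit : gram a a \in unitmx) (b_unit : gram b b \in unitmx)
  (G_orth : forall k l, \tr (G k *m G l) = (k == l)%:R)
  (H_orth : forall k l, \tr (H k *m H l) = (k == l)%:R)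
  (ab_dec : n%:R^-1 *: \sum_k (a k *t b k) = \sum_k lam k *: (G k *t H k)).

Lemma schmidt_pairing X Y :
  \sum_j lam j * (\tr (G j *m X) * \tr (H j *m Y)) =
  n%:R^-1 * \sum_k \tr (a k *m X) * \tr (b k *m Y).
Proof.
rewrite -mxtrace_sum_tens_mul -ab_dec -scalemxAl /= mxtraceZ mulmx_suml raddf_sum.
by congr (_ * _); apply: eq_bigr => k _; rewrite /= tensmx_mul mxtrace_tensmx.
Qed.

Lemma diag_mul_gramHb :
  diag_mx (\row_i lam i) *m gram H b = n%:R^-1 *: (gram G a *m gram b b).
Proof.
apply/matrixP => i q; rewrite mul_diag_mx !mxE.
have := schmidt_pairing (G i) (b q).
under eq_bigr => j _ do rewrite G_orth mulrCA mulrC.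
rewrite sum_mul_delta => ->; congr (_ * _); apply: eq_bigr => k _.
by rewrite !mxE mxtrace_mulC.
Qed.

Lemma diag_mul_gramGa :
  diag_mx (\row_i lam i) *m gram G a = n%:R^-1 *: (gram H b *m gram a a).
Proof.
apply/matrixP => l p; rewrite mul_diag_mx !mxE.
have := schmidt_pairing (a p) (H l).
under eq_bigr => j _ do rewrite H_orth mulrA.
rewrite sum_mul_delta => ->; congr (_ * _); apply: eq_bigr => k _.
by rewrite !mxE mulrC mxtrace_mulC.
Qed.

Lemma gramGa_unit : gram G a \in unitmx.
Proof.
rewrite -unitmx_tr; apply: unitmx_ker0 => x xU.
pose Z := \sum_k x 0 k *: a k.
have GZ j : \tr (G j *m Z) = 0.
  have := congr1 (fun M : 'rV[C]_n => M 0 j) xU; rewrite !mxE => <-.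
  rewrite mulmx_sumr raddf_sum; apply: eq_bigr => k _.
  by rewrite -scalemxAr /= mxtraceZ !mxE.
have xab : x *m (gram a a)^T *m gram b b = 0.
  apply/rowP => q; have := schmidt_pairing Z (b q).
  under eq_bigr do rewrite GZ mul0r mulr0.
  rewrite big1 // => /esym/eqP; rewrite mulf_eq0 invr_eq0 pnatr_eq0 eqn0Ngt n_gt0 /=.
  move=> /eqP ab0; rewrite !mxE -[in RHS]ab0; apply: eq_bigr => k _.
  rewrite !mxE mulmx_sumr raddf_sum; congr (_ * _); apply: eq_bigr => l _.
  by rewrite -scalemxAr /= mxtraceZ !mxE.
have xa : x *m (gram a a)^T = 0 by rewrite -(mulmxK b_unit (x *m _)) xab mul0mx.
have aT_unit : (gram a a)^T \in unitmx by rewrite unitmx_tr.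
by rewrite -(mulmxK aT_unit x) xa mul0mx.
Qed.

Lemma schmidt_coef_sqr_similar :
  exists2 U : 'M[C]_n, U \in unitmx &
    diag_mx (\row_i lam i ^+ 2) *m U = U *m ((n%:R ^+ 2)^-1 *: (gram b b *m gram a a)).
Proof.
exists (gram G a); first exact: gramGa_unit.
have -> : diag_mx (\row_i lam i ^+ 2) = diag_mx (\row_i lam i) *m diag_mx (\row_i lam i).
  by apply/matrixP => i j; rewrite mul_diag_mx !mxE mulrnAr expr2.
rewrite -mulmxA diag_mul_gramGa -scalemxAr mulmxA diag_mul_gramHb -scalemxAl scalerA.
by rewrite -scalemxAr mulmxA -exprVn expr2.
Qed.

End SchmidtCoefficientSpectrum.

Section EquiangularSchmidt.
Variables (C : numClosedFieldType) (n mA mB : nat).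
Variables (a : 'I_n -> 'M[C]_mA) (b : 'I_n -> 'M[C]_mB) (muA muB : C).
Hypotheses (n_gt0 : (0 < n)%N)
  (a_herm : forall k, Defs.hermitian (a k)) (b_herm : forall k, Defs.hermitian (b k))
  (a_gram : gram a a = (1 - muA)%:M + muA *: ones_mx C n)
  (b_gram : gram b b = (1 - muB)%:M + muB *: ones_mx C n)
  (eA_gt0 : 0 < 1 - muA) (fA_gt0 : 0 < 1 - muA + n%:R * muA)
  (eB_gt0 : 0 < 1 - muB) (fB_gt0 : 0 < 1 - muB + n%:R * muB).

Lemma equiangular_schmidt_exists (i0 : 'I_n) :
  exists (lam : 'I_n -> C) (G : 'I_n -> 'M[C]_mA) (H : 'I_n -> 'M[C]_mB),
    (forall k, 0 <= lam k) /\ orthonormal_herm G /\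
    orthonormal_herm H /\
    n%:R^-1 *: \sum_k (a k *t b k) = \sum_k lam k *: (G k *t H k).
Proof.
have [O [O_real O_sym O_orth O_ones]] := householder_ones C i0.
have sA_gt0 := frame_scale_gt0 i0 eA_gt0 fA_gt0.
have sB_gt0 := frame_scale_gt0 i0 eB_gt0 fB_gt0.
exists (fun j => frame_scale i0 muA j * frame_scale i0 muB j / n%:R).
exists (frame i0 O a muA), (frame i0 O b muB); split.
  by move=> j; rewrite divr_ge0 ?ler0n ?mulr_ge0 ?ltW.
split; first exact: frame_orthonormal.
split; first exact: frame_orthonormal.
by rewrite frame_tens_sum.
Qed.

Lemma equiangular_schmidt_unique (lam : 'I_n -> C)
    (G : 'I_n -> 'M[C]_mA) (H : 'I_n -> 'M[C]_mB) :
  (forall k, 0 <= lam k) /\ orthonormal_herm G /\ orthonormal_herm H /\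
    n%:R^-1 *: \sum_k (a k *t b k) = \sum_k lam k *: (G k *t H k) ->
  perm_eq [seq lam k | k <- enum 'I_n]
    (sqrtC ((1 - muA + n%:R * muA) * (1 - muB + n%:R * muB)) / n%:R
       :: nseq n.-1 (sqrtC ((1 - muA) * (1 - muB)) / n%:R)).
Proof.
move=> [lam_ge0 [[_ G_orth] [[_ H_orth] ab_dec]]].
have a_unit : gram a a \in unitmx by rewrite a_gram scalar_ones_unitmx ?gt_eqF.
have b_unit : gram b b \in unitmx by rewrite b_gram scalar_ones_unitmx ?gt_eqF.
have [U U_unit lamU] := schmidt_coef_sqr_similar n_gt0 a_unit b_unit G_orth H_orth ab_dec.
pose p := (n%:R ^+ 2)^-1 * ((1 - muB) * (1 - muA)).
pose q := (n%:R ^+ 2)^-1 * ((1 - muB) * muA + muB * (1 - muA) + muB * muA * n%:R).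
rewrite a_gram b_gram mul_scalar_ones_mx scalerDr scale_scalar_mx scalerA in lamU.
have n_neq0 : n%:R != 0 :> C by rewrite pnatr_eq0 -lt0n.
have alpha_sqr : (sqrtC ((1 - muA + n%:R * muA) * (1 - muB + n%:R * muB)) / n%:R) ^+ 2
                 = p + n%:R * q.
  by rewrite expr_div_n sqrtCK /p /q; field.
have beta_sqr : (sqrtC ((1 - muA) * (1 - muB)) / n%:R) ^+ 2 = p.
  by rewrite expr_div_n sqrtCK /p; field.
set L := [seq lam k | k <- enum 'I_n].
have size_L : size L = n by rewrite size_map size_enum_ord.
suff : perm_eq L (sqrtC ((1 - muA + n%:R * muA) * (1 - muB + n%:R * muB)) / n%:R
                  :: nseq (size L).-1 (sqrtC ((1 - muA) * (1 - muB)) / n%:R)).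
  by rewrite size_L.
apply: perm_eq_sqr_values; rewrite ?size_L //.
- by rewrite divr_ge0 ?ler0n ?sqrtC_ge0 ?mulr_ge0 ?ltW.
- by rewrite divr_ge0 ?ler0n ?sqrtC_ge0 ?mulr_ge0 ?ltW.
- move=> x /mapP[i _ ->]; split => //.
  have /eqP := eigen_scalar_ones_mx i U_unit lamU.
  by rewrite alpha_sqr beta_sqr mulf_eq0 !subr_eq0 => /orP[]/eqP; [left|right].
have trJ : \tr (ones_mx C n) = n%:R.
  by rewrite /mxtrace; under eq_bigr do rewrite mxE; rewrite sumr_const card_ord.
rewrite big_map big_enum /= alpha_sqr beta_sqr.
transitivity (\tr (diag_mx (\row_i lam i ^+ 2))).
  by rewrite mxtrace_diag; apply: eq_bigr => i _; rewrite mxE.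
rewrite (mxtrace_conj U_unit lamU) mxtraceD mxtrace_scalar mxtraceZ trJ.
by rewrite -subn1 natrB // /p /q; ring.
Qed.

End EquiangularSchmidt.

Section SchmidtValues.
Variable C : numClosedFieldType.

Lemma schmidt_alpha_value (dA dB : nat) (muA muB : C) :
  (0 < dA)%N -> (0 < dB)%N ->
  let n := (minn dA dB ^ 2)%N in
  1 - muA + n%:R * muA = n%:R / dA%:R -> 1 - muB + n%:R * muB = n%:R / dB%:R ->
  sqrtC ((1 - muA + n%:R * muA) * (1 - muB + n%:R * muB)) / n%:R =
  (sqrtC (maxn dA dB * minn dA dB)%:R)^-1.
Proof.
move=> dA_gt0 dB_gt0 n -> ->.
have n_gt0 : (0 < n)%N by rewrite /n expn_gt0 leq_min dA_gt0 dB_gt0.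
have -> : (maxn dA dB * minn dA dB = dA * dB)%N.
  by case: leqP => _ //; rewrite mulnC.
apply: (@pexpIrn _ 2);
  rewrite ?nnegrE ?divr_ge0 ?sqrtC_ge0 ?mulr_ge0 ?invr_ge0 ?sqrtC_ge0 ?ler0n //=.
rewrite expr_div_n exprVn !sqrtCK natrM.
by field; rewrite !pnatr_eq0 -!lt0n dA_gt0 dB_gt0 n_gt0.
Qed.

Lemma schmidt_beta_value (dA dB : nat) (muA muB : C) :
  (0 < dA)%N -> (0 < dB)%N ->
  let d := minn dA dB in let D := maxn dA dB in let n := (d ^ 2)%N in
  (1 < n)%N ->
  1 - muA + n%:R * muA = n%:R / dA%:R -> 1 - muB + n%:R * muB = n%:R / dB%:R ->
  sqrtC ((1 - muA) * (1 - muB)) / n%:R =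
  sqrtC (((D - 1)%:R / (D%:R * (d ^ 2 - 1)%:R)) * ((d - 1)%:R / (d%:R * (d ^ 2 - 1)%:R))).
Proof.
move=> dA_gt0 dB_gt0 d D n n_gt1 fA fB.
have n1_neq0 : n%:R - 1 != 0 :> C by rewrite subr_eq0 pnatr_eq1 eq_sym ltn_eqF.
have muA_val : muA = (n%:R / dA%:R - 1) / (n%:R - 1) by rewrite -fA; field.
have muB_val : muB = (n%:R / dB%:R - 1) / (n%:R - 1) by rewrite -fB; field.
set x := (_ / _) * (_ / _).
have -> : (1 - muA) * (1 - muB) = x * n%:R ^+ 2.
  have dA_neq0 : dA%:R != 0 :> C by rewrite pnatr_eq0 -lt0n.
  have dB_neq0 : dB%:R != 0 :> C by rewrite pnatr_eq0 -lt0n.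
  have: n%:R - 1 != 0 :> C := n1_neq0.
  rewrite muA_val muB_val /x /n /D /d !natrB ?expn_gt0 ?leq_min ?leq_max ?dA_gt0 ?dB_gt0 //.
  by rewrite !natrX; case: leqP => _ d21_neq0; field; rewrite dA_neq0 dB_neq0 d21_neq0.
have x_ge0 : 0 <= x by rewrite /x mulr_ge0 // divr_ge0 ?mulr_ge0 ?ler0n.
have n_neq0 : n%:R != 0 :> C by rewrite pnatr_eq0 -lt0n ltnW.
by rewrite sqrtCM ?nnegrE ?exprn_ge0 ?ler0n // sqrCK ?ler0n // mulfK.
Qed.

End SchmidtValues.

Unset Implicit Arguments.

Theorem theorem2 (C : numClosedFieldType) (dA dB : nat)
  (hA : (0 < dA)%N) (hB : (0 < dB)%N)
  (PA : 'I_((minn dA dB) ^ 2) -> 'M[C]_dA)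
  (PB : 'I_((minn dA dB) ^ 2) -> 'M[C]_dB)
  (hPA : quantum_design PA /\ regular_r1 PA /\ coherent PA /\ degree1 PA)
  (hPB : quantum_design PB /\ regular_r1 PB /\ coherent PB /\ degree1 PB) :
  let d := minn dA dB in
  let D := maxn dA dB in
  let rho : 'M[C]_(dA * dB) := (d ^ 2)%:R^-1 *: \sum_k (PA k *t PB k) in
  let alpha : C := (sqrtC (D * d)%:R)^-1 in
  let beta : C := sqrtC (((D - 1)%:R / (D%:R * (d ^ 2 - 1)%:R)) *
                         ((d - 1)%:R / (d%:R * (d ^ 2 - 1)%:R))) in
  os_coefficients_are rho (alpha :: nseq (d ^ 2 - 1) beta).
Proof.
move=> d D rho alpha beta.
have n_gt0 : (0 < d ^ 2)%N by rewrite expn_gt0 leq_min hA hB.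
have [PA_proj [PA_rank [PA_coh PA_deg]]] := hPA.
have [PB_proj [PB_rank [PB_coh PB_deg]]] := hPB.
have dA1 : dA = 1%N -> (d ^ 2 = 1)%N by move=> dA1; rewrite /d dA1 (minn_idPl hB).
have dB1 : dB = 1%N -> (d ^ 2 = 1)%N by move=> dB1; rewrite /d dB1 (minn_idPr hA).
have [muA [A_gram eA_gt0 fA]] := design_gram hA n_gt0 dA1 PA_proj PA_rank PA_coh PA_deg.
have [muB [B_gram eB_gt0 fB]] := design_gram hB n_gt0 dB1 PB_proj PB_rank PB_coh PB_deg.
have fA_gt0 : 0 < 1 - muA + (d ^ 2)%:R * muA by rewrite fA divr_gt0 ?ltr0n.
have fB_gt0 : 0 < 1 - muB + (d ^ 2)%:R * muB by rewrite fB divr_gt0 ?ltr0n.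
have PA_herm k : Defs.hermitian (PA k) by case: (PA_proj k).
have PB_herm k : Defs.hermitian (PB k) by case: (PB_proj k).
have schmidt_unique :=
  equiangular_schmidt_unique n_gt0 A_gram B_gram eA_gt0 fA_gt0 eB_gt0 fB_gt0.
have -> : alpha :: nseq (d ^ 2 - 1) beta =
    sqrtC ((1 - muA + (d ^ 2)%:R * muA) * (1 - muB + (d ^ 2)%:R * muB)) / (d ^ 2)%:R
      :: nseq (d ^ 2).-1 (sqrtC ((1 - muA) * (1 - muB)) / (d ^ 2)%:R).
  rewrite (schmidt_alpha_value hA hB fA fB) -subn1; congr (_ :: _).
  have [n_gt1|n_le1] := ltnP 1 (d ^ 2); first by rewrite (schmidt_beta_value hA hB n_gt1 fA fB).
  by have /eqP -> : (d ^ 2 - 1 == 0)%N by rewrite subn_eq0.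
split; last exact: schmidt_unique.
have [lam [G [H dec]]] := equiangular_schmidt_exists PA_herm PB_herm
  A_gram B_gram eA_gt0 fA_gt0 eB_gt0 fB_gt0 (Ordinal n_gt0).
by exists lam, G, H; split; last exact: schmidt_unique dec.
Qed.
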